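(* Let $\mathcal X$ be a countable space with the discrete metric and $\mathcal Y$ a Polish space. If a sequence $\{\mu_n\}_{n\in\mathbb N}$ of probability measures on $\mathcal X\times\mathcal Y$ converges setwise to a probability measure $\mu$ (i.e. $\mu_n(D)\to\mu(D)$ for every Borel $D\subset\mathcal X\times\mathcal Y$), then $\mu_n\to\mu$ in $\wp_I(\mathcal X\times\mathcal Y)$.
   Context: For a Polish space $\mathcal S$, $\wp(\mathcal S)$ denotes the Borel probability measures and $\wp_w(\mathcal S)$ this set with the weak-* topology (weakest topology making $\mu\mapsto\int g\,d\mu$ continuous for all bounded continuous $g$). For $\mu\in\wp(\mathcal X\times\mathcal Y)$, $\mu^{\mathcal X}$ is the marginal and $\mu(\cdot\mid x)$ a regular conditional distribution on $\mathcal Y$ given $x$. Let $\psi(\mu)\in\wp(\mathcal X\times\wp_w(\mathcal Y))$ be $\psi(\mu)(dx,d\zeta)=\delta_{\mu(\cdot\mid x)}(d\zeta)\mu^{\mathcal X}(dx)$. The topology of information on $\wp(\mathcal X\times\mathcal Y)$ is the coarsest topology making $\psi$ continuous into $\wp_w(\mathcal X\times\wp_w(\mathcal Y))$; $\wp_I(\mathcal X\times\mathcal Y)$ denotes $\wp(\mathcal X\times\mathcal Y)$ with it. Thus $\mu_n\to\mu$ in $\wp_I$ iff $\psi(\mu_n)\to\psi(\mu)$ weak-*. *)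

From HB Require Import structures.
From mathcomp Require Import all_boot all_order all_algebra.
From mathcomp Require Import all_classical all_reals all_analysis.
From mathcomp Require Import measurable_realfun.

Set Implicit Arguments.
Unset Strict Implicit.
Unset Printing Implicit Defensive.

Import Order.TTheory GRing.Theory Num.Theory.
Import numFieldNormedType.Exports.
Local Open Scope classical_set_scope.
Local Open Scope ring_scope.

Definition is_metric (R : realType) (T : Type) (d : T -> T -> R) : Prop :=
  [/\ forall x y, 0 <= d x y,
      forall x y, d x y = 0 <-> x = y,
      forall x y, d x y = d y x &
      forall x y z, d x z <= d x y + d y z].

Definition metric_induces_topology (R : realType) (T : topologicalType)
    (d : T -> T -> R) : Prop :=
  forall U : set T, open U <->
    (forall x, U x -> exists2 e : R, 0 < e & [set y | d x y < e] `<=` U).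

Definition metric_complete (R : realType) (T : Type) (d : T -> T -> R) : Prop :=
  forall u : nat -> T,
    (forall e : R, 0 < e -> exists N, forall m n, (N <= m)%N -> (N <= n)%N ->
        d (u m) (u n) < e) ->
    exists l, forall e : R, 0 < e -> exists N, forall n, (N <= n)%N -> d (u n) l < e.

Definition polish_space (R : realType) (T : topologicalType) : Prop :=
  (exists D : set T, countable D /\ closure D = [set: T]) /\
  (exists d : T -> T -> R,
      [/\ is_metric d, metric_induces_topology d & metric_complete d]).

Definition borel (T : ptopologicalType) := g_sigma_algebraType (@open T).

Section marginal.
Local Open Scope ereal_scope.
Context dX dY (X : measurableType dX) (Y : measurableType dY) (R : realType).
Variable mu : {measure set (X * Y)%type -> \bar R}.

Definition marginalX : set X -> \bar R := pushforward mu fst.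

Let marginalX0 : marginalX set0 = 0.
Proof. by rewrite /marginalX /pushforward preimage_set0 measure0. Qed.

Let marginalX_ge0 A : 0 <= marginalX A.
Proof. exact: measure_ge0. Qed.

Let marginalX_sigma_additive : semi_sigma_additive marginalX.
Proof.
move=> F mF tF mUF; rewrite /marginalX /pushforward preimage_bigcup.
apply: measure_semi_sigma_additive.
- by move=> n; rewrite -[X in measurable X]setTI; exact: measurable_fst.
- apply/trivIsetP => /= i j _ _ ij; rewrite -preimage_setI.
  by move/trivIsetP : tF => /(_ _ _ _ _ ij) ->//; rewrite preimage_set0.
- by rewrite -preimage_bigcup -[X in measurable X]setTI; exact: measurable_fst.
Qed.

HB.instance Definition _ := isMeasure.Build _ _ _
  marginalX marginalX0 marginalX_ge0 marginalX_sigma_additive.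
End marginal.

Definition gen_open (T : Type) (S : set (set T)) : set (set T) :=
  [set W | forall w, W w ->
     exists F : set (set T),
       [/\ finite_set F, F `<=` S, (\bigcap_(A in F) A) w &
           \bigcap_(A in F) A `<=` W]].

Definition bounded_continuous (R : realType) (T : topologicalType)
    (f : T -> R) : Prop :=
  continuous f /\ exists M : R, forall x, `|f x| <= M.

Section information_topology.
Local Open Scope ereal_scope.
Context (R : realType) (dX : measure_display) (X : measurableType dX)
        (Y : ptopologicalType).

Definition probY := probability (borel Y) R.

Definition weak_subbasis : set (set probY) :=
  [set U | exists f : Y -> R, bounded_continuous f /\
     exists V : set R, open V /\
       U = [set nu : probY | V (fine (\int[nu]_y (f y)%:E))]].

Definition weak_open : set (set probY) := gen_open weak_subbasis.

(* (every subset of X is open for the discrete metric)                  *)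
Definition prod_subbasis : set (set (X * probY)%type) :=
  [set W | (exists A : set X, W = A `*` [set: probY]) \/
           (exists U, weak_open U /\ W = [set: X] `*` U)].

Definition prod_open : set (set (X * probY)%type) := gen_open prod_subbasis.

Definition bounded_continuous_XP (g : X * probY -> R) : Prop :=
  (forall V : set R, open V -> prod_open (g @^-1` V)) /\
  exists M : R, forall z, (`|g z| <= M)%R.

Definition reg_cond_distr (mu : probability (X * borel Y)%type R)
    (kappa : X -> probY) : Prop :=
  (forall B : set (borel Y), measurable B ->
      measurable_fun [set: X] (fun x => kappa x B)) /\
  (forall (A : set X) (B : set (borel Y)), measurable A -> measurable B ->
      mu (A `*` B) = \int[marginalX mu]_(x in A) kappa x B).

(* \int g d psi(mu), where                                               *)
(*   psi(mu)(dx, dzeta) = delta_{kappa x}(dzeta) mu^X(dx)                 *)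
Definition psi_integral (mu : probability (X * borel Y)%type R)
    (kappa : X -> probY) (g : X * probY -> R) : \bar R :=
  \int[marginalX mu]_x (g (x, kappa x))%:E.

(* mu_n -> mu in the topology of information: psi(mu_n) -> psi(mu)     *)
(* weakly, for every choice of regular conditional distributions.        *)
Definition info_converges (mu_ : nat -> probability (X * borel Y)%type R)
    (mu : probability (X * borel Y)%type R) : Prop :=
  forall (kappa_ : nat -> X -> probY) (kappa : X -> probY),
    (forall n, reg_cond_distr (mu_ n) (kappa_ n)) ->
    reg_cond_distr mu kappa ->
    forall g, bounded_continuous_XP g ->
      (fun n => psi_integral (mu_ n) (kappa_ n) g) @ \oo -->
        psi_integral mu kappa g.

Definition setwise_converges (mu_ : nat -> probability (X * borel Y)%type R)
    (mu : probability (X * borel Y)%type R) : Prop :=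
  forall D : set (X * borel Y)%type, measurable D ->
    (fun n => mu_ n D) @ \oo --> mu D.

End information_topology.

From HB Require Import structures.
From mathcomp Require Import all_boot all_order all_algebra.
From mathcomp Require Import all_classical all_reals all_analysis.
From mathcomp Require Import measurable_realfun.
From mathcomp Require Import lra.

(** Setwise convergence of finite measures implies convergence of the
    integrals of bounded measurable functions: for a nonnegative function the
    integral, a supremum over simple functions, is lower semicontinuous, and
    applying this to [f] and to [M - f] gives continuity.  Hence the marginals
    on [X] converge setwise and, at every atom [x] of the limit marginal, the
    conditional distributions [kappa_ n x = mu_ n ({x} * .) / mu_ n^X {x}]
    converge setwise, hence weakly, so that [g (x, kappa_ n x)] tends to
    [g (x, kappa x)].  Now
      [\int g dpsi(mu_ n) = \int g (x, kappa x) dmu_ n^X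
                  + \int (g (x, kappa_ n x) - g (x, kappa x)) dmu_ n^X];
    the first term tends to [\int g dpsi(mu)], and the second is small since,
    [X] being countable, finitely many atoms carry almost all of the limit
    mass, while the [mu_ n^X]-mass of their complement converges to the small
    limit mass. *)

Set Implicit Arguments.
Unset Strict Implicit.
Unset Printing Implicit Defensive.
Import Order.TTheory GRing.Theory Num.Theory.
Import numFieldNormedType.Exports.
Local Open Scope classical_set_scope.
Local Open Scope ring_scope.

Lemma near_finite_forall (I : choiceType) (G : set I) (Q : I -> nat -> Prop) :
  finite_set G -> (forall i, G i -> \forall n \near \oo, Q i n) ->
  \forall n \near \oo, forall i, G i -> Q i n.
Proof.
move=> /finite_fsetP[D ->] GQ.
apply: filterS (filter_bigI (f := Q) _ _) => [n DQ i /DQ //|i /GQ //].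
Qed.

Lemma gen_open_near (T : Type) (S : set (set T)) (W : set T) (w : T)
    (u : nat -> T) :
  gen_open S W -> W w ->
  (forall A, S A -> A w -> \forall n \near \oo, A (u n)) ->
  \forall n \near \oo, W (u n).
Proof.
move=> /(_ w) oW /oW[F [finF FS Fw FW]] Su.
apply: filterS (near_finite_forall (Q := fun A n => A (u n)) finF _).
  by move=> n Fu; apply: FW => A /Fu.
by move=> A FA; exact: Su (FS _ FA) (Fw _ FA).
Qed.

Lemma cvge_sum (R : realType) (I : Type) (r : seq I)
    (u_ : nat -> I -> \bar R) (u : I -> \bar R) :
  (forall i, u i \is a fin_num) -> (forall i, u_ ^~ i @ \oo --> u i) ->
  (fun n => \sum_(i <- r) u_ n i)%E @ \oo --> (\sum_(i <- r) u i)%E.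
Proof.
move=> u_fin u_cvg; elim: r => [|i r IHr].
  by under eq_fun do rewrite big_nil; rewrite big_nil; exact: cvg_cst.
under eq_fun do rewrite big_cons; rewrite big_cons.
by apply: cvgeD => //; exact/fin_num_adde_defr/u_fin.
Qed.

Section finite_measure_integral.
Context d (T : measurableType d) (R : realType).
Variable m : {finite_measure set T -> \bar R}.

Lemma finite_measure_bounded_integrable (D : set T) (f : T -> R) (M : R) :
  measurable D -> measurable_fun D f -> (forall x, D x -> `|f x| <= M) ->
  m.-integrable D (EFin \o f).
Proof.
move=> mD mf fM; apply: measurable_bounded_integrable => //.
  by rewrite ltey_eq fin_num_measure.
exists M; split; first exact: num_real.
by move=> M' /ltW MM' x Dx; exact: le_trans (fM x Dx) MM'.
Qed.

Lemma bounded_integralE (f : T -> R) (M : R) :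
  measurable_fun setT f -> (forall x, `|f x| <= M) ->
  (\int[m]_x (f x)%:E)%E = (\int[m]_x f x)%:E.
Proof.
move=> mf fM; rewrite fineK//; apply: integrable_fin_num => //.
exact: (finite_measure_bounded_integrable _ mf (fun x _ => fM x)).
Qed.

End finite_measure_integral.

Section setwise_convergence.
Context d (T : measurableType d) (R : realType).
Variables (nu_ : nat -> {finite_measure set T -> \bar R})
          (nu : {finite_measure set T -> \bar R}).
Hypothesis nu_cvg : forall A, measurable A -> (fun n => nu_ n A) @ \oo --> nu A.

Import HBNNSimple.

Lemma setwise_cvg_sintegral (h : {nnsfun T >-> R}) :
  (fun n => sintegral (nu_ n) h) @ \oo --> sintegral nu h.
Proof.
have fin_h : finite_set (range h) by exact: fimfunP.
under eq_fun do rewrite sintegralE (fsbig_finite _ _ fin_h).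
rewrite sintegralE (fsbig_finite _ _ fin_h).
have mh y : measurable (h @^-1` [set y]) by exact: measurable_sfunP.
apply: cvge_sum => [y|y]; first by rewrite fin_numM// fin_num_measure.
apply: cvgeM; [by rewrite mule_def_fin// fin_num_measure|exact: cvg_cst|].
exact: nu_cvg.
Qed.

(* The integral is the supremum of the integrals of the simple functions below
   it, each of which converges: hence lower semicontinuity. *)
Lemma setwise_lsc_Rintegral (f : T -> R) (M : R) :
  measurable_fun setT f -> (forall x, 0 <= f x) -> (forall x, `|f x| <= M) ->
  forall a, a < \int[nu]_x f x -> \forall n \near \oo, a < \int[nu_ n]_x f x.
Proof.
move=> mf f0 fM a.
have f0E x : (0 <= (f x)%:E)%E by rewrite lee_fin.
rewrite -lte_fin -(bounded_integralE _ mf fM) ge0_integralTE//.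
move=> /ereal_sup_gt[_ [h hf <-] ah].
have : \forall n \near \oo, (a%:E < sintegral (nu_ n) h)%E.
  exact: @setwise_cvg_sintegral h _ (open_ereal_gt' ah).
apply: filterS => n ahn.
rewrite -lte_fin -(bounded_integralE _ mf fM) (lt_le_trans ahn)//.
by rewrite ge0_integralTE//; apply: ereal_sup_ubound; exists h.
Qed.

Lemma setwise_cvg_measureT :
  (fun n => fine (nu_ n setT)) @ \oo --> fine (nu setT).
Proof.
by apply: fine_cvg; rewrite fineK ?fin_num_measure//; exact: nu_cvg.
Qed.

(* Lower semicontinuity applied to [f] and to [M - f], whose integrals add up
   to the converging [M * nu_ n setT]. *)
Lemma setwise_cvg_Rintegral_ge0 (f : T -> R) (M : R) :
  measurable_fun setT f -> (forall x, 0 <= f x) -> (forall x, `|f x| <= M) ->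
  (fun n => \int[nu_ n]_x f x) @ \oo --> \int[nu]_x f x.
Proof.
move=> mf f0 fM; pose g x := M - f x.
have mg : measurable_fun setT g by exact: measurable_funB.
have g0 x : 0 <= g x by rewrite subr_ge0 (le_trans _ (fM x))// ler_norm.
have gM x : `|g x| <= M by rewrite ger0_norm// lerBlDr lerDl.
have fgE (m : {finite_measure set T -> \bar R}) :
    \int[m]_x f x + \int[m]_x g x = M * fine (m setT).
  rewrite -RintegralD//; last 2 first.
  - exact: finite_measure_bounded_integrable (fun x _ => fM x).
  - exact: finite_measure_bounded_integrable (fun x _ => gM x).
  by under eq_Rintegral do rewrite /g addrC subrK; rewrite Rintegral_cst.
have MT : (fun n => M * fine (nu_ n setT)) @ \oo --> M * fine (nu setT).
  exact: cvgM (cvg_cst M) setwise_cvg_measureT.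
apply/(@cvgrPdist_lt _ R^o) => e e0.
have e20 : 0 < e / 2 by rewrite divr_gt0.
near=> n.
have /= lt_f : \int[nu]_x f x - e < \int[nu_ n]_x f x.
  by near: n; apply: (setwise_lsc_Rintegral mf f0 fM); rewrite ltrBlDr ltrDl.
have /= lt_g : \int[nu]_x g x - e / 2 < \int[nu_ n]_x g x.
  by near: n; apply: (setwise_lsc_Rintegral mg g0 gM); rewrite ltrBlDr ltrDl.
have : `|M * fine (nu setT) - M * fine (nu_ n setT)| < e / 2.
  by near: n; exact: (@cvgrPdist_lt _ R^o _ _ _ _ _).1 MT _ e20.
have := fgE nu; have := fgE (nu_ n).
rewrite /= !ltr_norml => ? ? /andP[? ?]; apply/andP; split; lra.
Unshelve. all: by end_near.
Qed.

Lemma setwise_cvg_Rintegral (f : T -> R) (M : R) :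
  measurable_fun setT f -> (forall x, `|f x| <= M) ->
  (fun n => \int[nu_ n]_x f x) @ \oo --> \int[nu]_x f x.
Proof.
move=> mf fM.
have fpnE x : f^\+ x + f^\- x = `|f x|.
  by have /(congr1 (fun h => h x)) := funrposDneg f.
have fpM x : `|f^\+ x| <= M.
  rewrite ger0_norm ?funrpos_ge0// (le_trans _ (fM x))//.
  by rewrite -fpnE lerDl funrneg_ge0.
have fnM x : `|f^\- x| <= M.
  rewrite ger0_norm ?funrneg_ge0// (le_trans _ (fM x))//.
  by rewrite -fpnE lerDr funrpos_ge0.
have mfp : measurable_fun setT f^\+ by exact: measurable_funrpos.
have mfn : measurable_fun setT f^\- by exact: measurable_funrneg.
have fE (m : {finite_measure set T -> \bar R}) :
    \int[m]_x f x = \int[m]_x f^\+ x - \int[m]_x f^\- x.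
  rewrite -RintegralB//; last 2 first.
  - exact: finite_measure_bounded_integrable (fun x _ => fpM x).
  - exact: finite_measure_bounded_integrable (fun x _ => fnM x).
  by rewrite -[in LHS](funrposBneg f).
under eq_fun do rewrite fE; rewrite fE.
apply: cvgB; [exact: (setwise_cvg_Rintegral_ge0 mfp _ fpM)|].
exact: (setwise_cvg_Rintegral_ge0 mfn _ fnM).
Qed.

End setwise_convergence.

Lemma continuous_borel_measurable (R : realType) (Y : ptopologicalType)
    (f : Y -> R) :
  continuous f -> measurable_fun (setT : set (borel Y)) f.
Proof.
move=> /continuousP cf; apply: (measurability _ (RGenOpens.measurableE R)).
move=> _ [_ [a [b ->]] <-]; rewrite setTI.
by apply: sub_sigma_algebra; apply: cf; exact: interval_open.
Qed.

Section weak_convergence.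
Context (R : realType) (Y : ptopologicalType).

Definition weak_cvg (p_ : nat -> probY R Y) (p : probY R Y) : Prop :=
  forall f, bounded_continuous f ->
    (fun n => \int[p_ n]_y f y) @ \oo --> \int[p]_y f y.

Lemma setwise_weak_cvg (p_ : nat -> probY R Y) (p : probY R Y) :
  (forall B, measurable B -> (fun n => p_ n B) @ \oo --> p B) -> weak_cvg p_ p.
Proof.
move=> p_cvg f [cf [M fM]].
exact: (@setwise_cvg_Rintegral _ _ _ (fun n => p_ n) p p_cvg _ M
  (continuous_borel_measurable cf) fM).
Qed.

Lemma weak_cvg_near (p_ : nat -> probY R Y) (p : probY R Y) :
  weak_cvg p_ p -> forall U, weak_open U -> U p ->
  \forall n \near \oo, U (p_ n).
Proof.
move=> p_cvg U oU Up; apply: (gen_open_near oU Up).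
move=> _ [f [bf [V [oV ->]]]] /= Vp.
by apply: (p_cvg f bf); exact: open_nbhs_nbhs.
Qed.

Lemma bounded_continuous_XP_cvg (dX : measure_display) (X : measurableType dX)
    (g : X * probY R Y -> R) (x : X) (p_ : nat -> probY R Y) (p : probY R Y) :
  bounded_continuous_XP g -> weak_cvg p_ p ->
  (fun n => g (x, p_ n)) @ \oo --> g (x, p).
Proof.
move=> [cg _] p_cvg; apply/(@cvgrPdist_lt _ R^o) => e e0.
have oB : open (ball (g (x, p)) e : set R^o) by exact: ball_open.
have gxp : (g @^-1` ball (g (x, p)) e) (x, p) by exact: ballxx.
suff : \forall n \near \oo, ball (g (x, p)) e (g (x, p_ n)) by [].
apply: (gen_open_near (u := fun n => (x, p_ n)) (cg _ oB) gxp).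
move=> _ [[A ->]|[U [oU ->]]] /= [Ax Up]; first exact: nearW.
by apply: filterS (weak_cvg_near p_cvg oU Up).
Qed.

End weak_convergence.

Lemma cvg_ratio (R : realType) (k_ a_ b_ : nat -> R) (k a b : R) :
  (forall n, k_ n * b_ n = a_ n) -> k * b = a -> b != 0 ->
  a_ @ \oo --> a -> b_ @ \oo --> b -> k_ @ \oo --> k.
Proof.
move=> kbE kbE' b0 a_cvg b_cvg.
have -> : k = a / b by rewrite -kbE' mulfK.
apply: cvg_trans (cvgM a_cvg (cvgV b0 b_cvg)); apply: near_eq_cvg.
have b_near := (@cvgrPdist_lt _ R^o _ _ _ _ _).1 b_cvg `|b|
  (ltac:(by rewrite normr_gt0)).
near=> n.
have bn0 : b_ n != 0.
  apply: contraTneq (_ : `|b - b_ n| < `|b|) => [->|].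
    by rewrite subr0 ltxx.
  by near: n; exact: b_near.
by rewrite /= -kbE mulfK.
Unshelve. all: by end_near.
Qed.

Section marginal_probability.
Context (R : realType) dX (X : measurableType dX) dY (Y : measurableType dY).
Variable m : probability (X * Y)%type R.

Lemma marginalXE (A : set X) : marginalX m A = m (A `*` setT).
Proof.
rewrite /marginalX /pushforward; congr (m _).
by apply/seteqP; split => -[a b] //= [].
Qed.

Lemma marginalX_setT : marginalX m setT = 1%E.
Proof. by rewrite marginalXE setXTT probability_setT. Qed.

HB.instance Definition _ :=
  Measure_isProbability.Build _ _ _ (marginalX m) marginalX_setT.

End marginal_probability.

Section conditional_distribution.
Context (R : realType) (dX : measure_display) (X : measurableType dX)
        (Y : ptopologicalType).

Lemma setwise_cvg_marginalX (mu_ : nat -> probability (X * borel Y)%type R)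
    (mu : probability (X * borel Y)%type R) :
  setwise_converges mu_ mu -> forall A, measurable A ->
  (fun n => marginalX (mu_ n) A) @ \oo --> marginalX mu A.
Proof.
move=> mu_cvg A mA; under eq_fun do rewrite marginalXE; rewrite marginalXE.
by apply: mu_cvg; exact: measurableX.
Qed.

Lemma reg_cond_distr_atomE (mu : probability (X * borel Y)%type R)
    (kappa : X -> probY R Y) : reg_cond_distr mu kappa ->
  forall x B, measurable [set x] -> measurable B ->
  mu ([set x] `*` B) = (kappa x B * marginalX mu [set x])%E.
Proof.
move=> [_ muE] x B mx mB; rewrite muE//.
by rewrite (eq_integral (fun=> kappa x B)) ?integral_cst// => y /[!inE] ->.
Qed.

(* At an atom [x] of the limiting marginal, [kappa_ n x B] is the ratio
   [mu_ n ([set x] `*` B) / marginalX (mu_ n) [set x]] of setwise converging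
   quantities. *)
Lemma reg_cond_distr_cvg_atom (mu_ : nat -> probability (X * borel Y)%type R)
    (mu : probability (X * borel Y)%type R)
    (kappa_ : nat -> X -> probY R Y) (kappa : X -> probY R Y) (x : X) :
  setwise_converges mu_ mu -> (forall n, reg_cond_distr (mu_ n) (kappa_ n)) ->
  reg_cond_distr mu kappa -> measurable [set x] ->
  marginalX mu [set x] != 0%E -> weak_cvg (kappa_ ^~ x) (kappa x).
Proof.
move=> mu_cvg kappa_E kappaE mx x_atom; apply: setwise_weak_cvg => B mB.
have mxB : measurable ([set x] `*` B) by exact: measurableX.
have fine_cvg_of (u : nat -> \bar R) (l : \bar R) :
    l \is a fin_num -> u @ \oo --> l -> fine \o u @ \oo --> fine l.
  by move=> l_fin; rewrite -(fineK l_fin) => /fine_cvg.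
rewrite -(fineK (fin_num_measure _ _ mB)); apply/fine_cvgP; split.
  by apply: nearW => n; exact: fin_num_measure.
apply: (@cvg_ratio _ _ (fine \o (fun n => mu_ n ([set x] `*` B)))
  (fine \o (fun n => marginalX (mu_ n) [set x])) _
  (fine (mu ([set x] `*` B))) (fine (marginalX mu [set x]))).
- move=> n /=.
  by rewrite (reg_cond_distr_atomE (kappa_E n))// fineM// fin_num_measure.
- by rewrite (reg_cond_distr_atomE kappaE)// fineM// fin_num_measure.
- by rewrite fine_eq0// fin_num_measure.
- by apply: fine_cvg_of; [exact: fin_num_measure|exact: mu_cvg].
- apply: fine_cvg_of; first exact: fin_num_measure.
  exact: setwise_cvg_marginalX.
Qed.

End conditional_distribution.

Lemma Rintegral_le_split d (T : measurableType d) (R : realType)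
    (m : {finite_measure set T -> \bar R}) (G : set T) (f : T -> R) (a K : R) :
  measurable G -> measurable_fun setT f -> (forall x, 0 <= f x <= K) ->
  (forall x, G x -> f x <= a) -> 0 <= a ->
  \int[m]_x f x <= a * fine (m setT) + K * fine (m (~` G)).
Proof.
move=> mG mf fK fa a0.
have fM x : `|f x| <= K by case/andP: (fK x) => f0; rewrite ger0_norm.
have int_f D : measurable D -> m.-integrable D (EFin \o f).
  move=> mD; apply: finite_measure_bounded_integrable (fun x _ => fM x) => //.
  exact: measurable_funS mf.
have int_cst D (c : R) : measurable D -> m.-integrable D (EFin \o cst c).
  move=> mD; apply: (@finite_measure_bounded_integrable _ _ _ m D _ `|c|) => //.
have mCG : measurable (~` G) by exact: measurableC.
rewrite -{1}(setUv G) Rintegral_setU ?int_f ?setUv//; last exact/disj_setPCl.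
apply: lerD.
- apply: le_trans (_ : \int[m]_(x in G) a <= _).
    by apply: le_Rintegral => //; [exact: int_f|exact: int_cst].
  rewrite Rintegral_cst// ler_wpM2l// fine_le ?fin_num_measure//.
  by apply: le_measure; rewrite ?inE.
- apply: le_trans (_ : \int[m]_(x in ~` G) K <= _).
    2: by rewrite Rintegral_cst.
  apply: le_Rintegral => //; [exact: int_f|exact: int_cst|].
  by move=> x _; case/andP: (fK x).
Qed.

Section countable_discrete.
Context (R : realType) (dX : measure_display) (X : measurableType dX).
Hypothesis X_countable : countable [set: X].
Hypothesis X_discrete : forall A : set X, measurable A.

Lemma measure_null_atoms (m : {measure set X -> \bar R}) :
  m [set x | m [set x] = 0%E] = 0%E.
Proof.
have [enc enc_inj] := countable_injP _ X_countable.
pose S k := [set x | enc x = k /\ m [set x] = 0%E].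
have -> : [set x | m [set x] = 0%E] = \bigcup_k S k.
  by apply/seteqP; split => [x x0|x [k _ []]]//; exists (enc x).
apply/negligibleP; first exact: X_discrete.
apply: negligible_bigcup => k; apply/negligibleP; first exact: X_discrete.
have [->|/set0P[x [xk x0]]] := eqVneq (S k) set0; first exact: measure0.
apply/eqP; rewrite eq_le measure_ge0 andbT -x0 le_measure ?inE//.
by move=> y [yk _]; apply: enc_inj; rewrite ?inE// yk xk.
Qed.

(* The complements of the atoms of [m] carrying a label [< k] under an
   injection into [nat] decrease to the null atoms. *)
Lemma finite_atoms_approx (m : {finite_measure set X -> \bar R}) (e : R) :
  0 < e -> exists G : set X,
    [/\ finite_set G, forall x, G x -> m [set x] != 0%E & (m (~` G) < e%:E)%E].
Proof.
move=> e0; have [enc enc_inj] := countable_injP _ X_countable.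
pose N := [set x | m [set x] = 0%E].
pose G k := [set x | (enc x < k)%N] `&` ~` N.
have finG k : finite_set (G k).
  apply: (@sub_finite_set _ _ (enc @^-1` `I_k)); first by move=> x [].
  apply: finite_preimage (finite_II k) => a b _ _.
  by apply: enc_inj; rewrite inE.
have NE : N = \bigcap_k ~` G k.
  apply/seteqP; split => [x Nx k _|x]; first by rewrite setCI setCK; right.
  by move=> /(_ (enc x).+1 I); rewrite setCI setCK => -[]//=.
have G_cvg : (fun k => m (~` G k)) @ \oo --> 0%E.
  rewrite -(measure_null_atoms m) -/N NE; apply: nonincreasing_cvg_mu => //.
  - by rewrite ltey_eq fin_num_measure.
  - move=> k k' kk'; rewrite subsetEset !setCI !setCK.
    move=> x [/= kx|]; [left|by right].
    by move=> k'x; apply: kx; exact: leq_trans k'x kk'.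
have e0' : (0 < e%:E)%E by rewrite lte_fin.
have [k _ /(_ k (leqnn k)) Gk] := G_cvg _ (open_ereal_lt' e0').
by exists (G k); split => // x [_ /eqP].
Qed.

(* Outside a finite set of atoms carrying almost all the limit mass, the
   [nu_ n]-mass is eventually small; on that finite set [d_ n] is eventually
   uniformly small. *)
Lemma setwise_cvg_Rintegral_atoms (nu_ : nat -> probability X R)
    (nu : probability X R) (d_ : nat -> X -> R) (K : R) :
  (forall A, (fun n => nu_ n A) @ \oo --> nu A) ->
  (forall n x, 0 <= d_ n x <= K) ->
  (forall x, nu [set x] != 0%E -> d_ ^~ x @ \oo --> 0) ->
  (fun n => \int[nu_ n]_x d_ n x) @ \oo --> 0.
Proof.
move=> nu_cvg dK d_cvg; apply/(@cvgrPdist_lt _ R^o) => e e0.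
have e20 : 0 < e / 2 by rewrite divr_gt0.
have K0 : 0 <= K by case/andP: (dK 0%N point) => /le_trans; apply.
have K1_gt0 : 0 < K + 1 by rewrite ltr_wpDl.
have [G [finG G_atoms nuG]] := finite_atoms_approx nu (divr_gt0 e20 K1_gt0).
near=> n.
have dG : forall x, G x -> d_ n x < e / 2.
  near: n; apply: near_finite_forall finG _ => x /G_atoms /d_cvg.
  move=> /(@cvgrPdist_lt _ R^o)/(_ _ e20); apply: filterS => n.
  by rewrite sub0r normrN; apply: le_lt_trans; exact: ler_norm.
have nu_nG : fine (nu_ n (~` G)) * (K + 1) < e / 2.
  rewrite -ltr_pdivlMr// -lte_fin fineK ?fin_num_measure//.
  by near: n; exact: nu_cvg _ (open_ereal_lt' nuG).
have nu_nG0 : 0 <= fine (nu_ n (~` G)) by rewrite fine_ge0.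
have := Rintegral_le_split (nu_ n) (X_discrete G) (fun _ B _ => X_discrete _)
  (dK n) (fun x Gx => ltW (dG x Gx)) (ltW e20).
(* the total mass appears through the finite-measure structure of [nu_ n];
   restate it through the probability structure to rewrite it *)
rewrite -[X in e / 2 * X]/(fine (nu_ n setT)) probability_setT mulr1.
rewrite sub0r normrN ger0_norm; last first.
  by apply: Rintegral_ge0 => x _; case/andP: (dK n x).
move: nu_nG; rewrite mulrDr mulr1; nra.
Unshelve. all: by end_near.
Qed.

End countable_discrete.

Lemma cvg_Rintegral_approx d (T : measurableType d) (R : realType)
    (m_ : nat -> {finite_measure set T -> \bar R}) (h_ : nat -> T -> R)
    (h : T -> R) (l M : R) :
  (forall n, measurable_fun setT (h_ n)) -> measurable_fun setT h ->
  (forall n x, `|h_ n x| <= M) -> (forall x, `|h x| <= M) ->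
  (fun n => \int[m_ n]_x h x) @ \oo --> l ->
  (fun n => \int[m_ n]_x `|h_ n x - h x|) @ \oo --> 0 ->
  (fun n => \int[m_ n]_x h_ n x) @ \oo --> l.
Proof.
move=> mh_ mh h_M hM h_cvg dist_cvg.
have mdh n : measurable_fun setT (fun x => h_ n x - h x).
  exact: measurable_funB.
have dhM n x : `|h_ n x - h x| <= M + M.
  by rewrite (le_trans (ler_normB _ _))// lerD ?h_M ?hM.
have int_dh n := finite_measure_bounded_integrable (m_ n) measurableT (mdh n)
  (fun x _ => dhM n x).
have hE n : \int[m_ n]_x h_ n x =
    \int[m_ n]_x h x + \int[m_ n]_x (h_ n x - h x).
  rewrite -RintegralD//; last exact: int_dh.
    by apply: eq_Rintegral => x _; rewrite addrC subrK.
  exact: finite_measure_bounded_integrable (fun x _ => hM x).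
under eq_fun do rewrite hE; rewrite -[l]addr0; apply: cvgD => //.
apply/(@cvgrPdist_lt _ R^o) => e e0.
apply: filterS ((@cvgrPdist_lt _ R^o _ _ _ _ _).1 dist_cvg e e0) => n /=.
rewrite !sub0r !normrN; apply: le_lt_trans.
rewrite [leRHS]ger0_norm ?Rintegral_ge0//.
exact: le_normr_Rintegral (int_dh n).
Qed.

Theorem theorem4 (R : realType) (dX : measure_display) (X : measurableType dX)
    (Y : ptopologicalType)
    (X_countable : countable [set: X])
    (X_discrete : forall A : set X, measurable A)
    (Y_polish : polish_space R Y)
    (mu_ : nat -> probability (X * borel Y)%type R)
    (mu : probability (X * borel Y)%type R) :
  setwise_converges mu_ mu -> info_converges mu_ mu.
Proof.
move=> mu_cvg kappa_ kappa kappa_E kappaE g bcg; have [_ [M gM]] := bcg.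
have mX (f : X -> R) : measurable_fun setT f by move=> _ B _; exact: X_discrete.
pose h x := g (x, kappa x); pose h_ n x := g (x, kappa_ n x).
rewrite /psi_integral (bounded_integralE _ (mX h) (fun x => gM _)).
under eq_fun do rewrite (bounded_integralE _ (mX (h_ _)) (fun x => gM _)).
apply: cvg_EFin; first exact: nearW.
have marg_cvg A := setwise_cvg_marginalX mu_cvg (X_discrete A).
apply: (cvg_Rintegral_approx (fun n => mX (h_ n)) (mX h) (fun n x => gM _)
  (fun x => gM _)).
  exact: (@setwise_cvg_Rintegral _ _ _ (fun n => marginalX (mu_ n))
    (marginalX mu) (fun A _ => marg_cvg A) _ M (mX h) (fun x => gM _)).
apply: (setwise_cvg_Rintegral_atoms X_countable X_discrete (K := M + M)
  marg_cvg).
  by move=> n x; rewrite normr_ge0 /= (le_trans (ler_normB _ _))// lerD ?gM.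
move=> x x_atom; apply/norm_cvg0P/subr_cvg0.
apply: bounded_continuous_XP_cvg bcg _.
exact: reg_cond_distr_cvg_atom mu_cvg kappa_E kappaE (X_discrete _) x_atom.
Qed.
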